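(* Let $t$ be a positive integer, $s\ge 2$, and let $G=K(n_1,\dots,n_s)$ be a complete $s$-partite graph with $n_1\ge n_2\ge\cdots\ge n_s\ge 1$. If $n_1\ge 2t$ then $\beta_t(G)=n_1$, and if $n_1\le 2t$ then $\beta_t(G)\le 2t$.
   Context: $K(n_1,\dots,n_s)$ denotes the complete $s$-partite graph whose parts have $n_1,\dots,n_s$ vertices. A set $S\subseteq V(G)$ is $t$-sparse if the induced subgraph $G[S]$ has maximum degree at most $t$; $\beta_t(G)$ is the maximum size of a $t$-sparse set of $G$. *)

From mathcomp Require Import all_boot.
Set Implicit Arguments. Unset Strict Implicit. Unset Printing Implicit Defensive.

(* A simple graph on a finite vertex type V is given by a symmetric,
   irreflexive adjacency relation adj. *)

Definition t_sparse (V : finType) (adj : rel V) (t : nat) (S : {set V}) : bool :=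
  [forall v in S, #|[set u in S | adj v u]| <= t].

Definition beta_t (V : finType) (adj : rel V) (t : nat) : nat :=
  \max_(S : {set V} | t_sparse adj t S) #|S|.

(* Vertices are pairs (i, j) with
   i < s the part index and j < n_(i+1) the index within the part. *)
Definition cmp_vertex (ns : seq nat) : finType :=
  {i : 'I_(size ns) & 'I_(nth 0 ns i)}.

Definition cmp_adj (ns : seq nat) : rel (cmp_vertex ns) :=
  fun u v => tag u != tag v.

From mathcomp Require Import all_boot.

Set Implicit Arguments.
Unset Strict Implicit.
Unset Printing Implicit Defensive.

(* A t-sparse set of K(n_1,...,n_s) meeting two different parts is covered by
   the neighbourhoods of one of its vertices in each of these parts, so it has
   at most 2t vertices; otherwise it lies inside a single part, which has at
   most n_1 vertices.  Conversely the first part is independent, hence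
   t-sparse, so beta_t is squeezed between n_1 and max(n_1, 2t). *)

Section SparseSets.

Variables (V : finType) (adj : rel V) (t : nat).

Lemma t_sparseP (S : {set V}) :
  reflect (forall v, v \in S -> #|[set u in S | adj v u]| <= t)
          (t_sparse adj t S).
Proof. exact: forall_inP. Qed.

Lemma leq_beta_t (S : {set V}) : t_sparse adj t S -> #|S| <= beta_t adj t.
Proof. exact: (@leq_bigmax_cond _ (t_sparse adj t) (fun S => #|S|)). Qed.

Lemma beta_t_leq m :
  (forall S : {set V}, t_sparse adj t S -> #|S| <= m) -> beta_t adj t <= m.
Proof. by move=> Sm; apply/bigmax_leqP => S; apply: Sm. Qed.

Lemma independent_t_sparse (S : {set V}) :
  {in S &, forall u v, ~~ adj u v} -> t_sparse adj t S.
Proof.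
move=> indS; apply/t_sparseP => v vS.
suff -> : [set u in S | adj v u] = set0 by rewrite cards0.
by apply/setP => u; rewrite !inE; apply/negbTE/negP => /andP[uS]; apply/negP/indS.
Qed.

Lemma t_sparse_card_dominated (S : {set V}) v w :
  t_sparse adj t S -> v \in S -> w \in S ->
  {in S, forall u, adj v u || adj w u} -> #|S| <= 2 * t.
Proof.
move=> /t_sparseP sparseS vS wS dom.
have cover : S \subset [set u in S | adj v u] :|: [set u in S | adj w u].
  by apply/subsetP => u uS; rewrite !inE uS; apply: dom.
apply: leq_trans (subset_leq_card cover) _.
apply: leq_trans (leq_card_setU _ _) _.
by rewrite mul2n -addnn leq_add ?sparseS.
Qed.

End SparseSets.

Section CompleteMultipartite.

Variables (ns : seq nat) (t : nat).

Definition cmp_part (i : 'I_(size ns)) : {set cmp_vertex ns} :=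
  [set Tagged (fun k : 'I_(size ns) => 'I_(nth 0 ns k)) j | j : 'I_(nth 0 ns i)].

Lemma mem_cmp_part i u : (u \in cmp_part i) = (tag u == i).
Proof.
apply/imsetP/eqP => [[j _ ->] // | ].
by case: u => k j /= eki; subst k; exists j.
Qed.

Lemma card_cmp_part i : #|cmp_part i| = nth 0 ns i.
Proof.
by rewrite card_imset ?card_ord // => j j'; apply: eq_from_Tagged.
Qed.

Lemma cmp_part_t_sparse i : t_sparse (@cmp_adj ns) t (cmp_part i).
Proof.
apply: independent_t_sparse => u v.
by rewrite !mem_cmp_part /cmp_adj => /eqP-> /eqP->; rewrite eqxx.
Qed.

Hypothesis ns_sorted : sorted geq ns.

Lemma card_cmp_part_le_head i : #|cmp_part i| <= nth 0 ns 0.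
Proof.
have geq_trans : transitive geq by move=> a b c ba cb; apply: leq_trans cb ba.
rewrite card_cmp_part.
apply: (sorted_leq_nth geq_trans (@leqnn)) => //.
  by rewrite inE (leq_ltn_trans _ (ltn_ord i)).
by rewrite inE.
Qed.

Lemma cmp_t_sparse_card S :
  t_sparse (@cmp_adj ns) t S -> #|S| <= maxn (nth 0 ns 0) (2 * t).
Proof.
move=> sparseS.
have [-> | [v vS]] := set_0Vmem S; first by rewrite cards0.
case: (boolP [exists w in S, tag w != tag v]) => [/exists_inP[w wS vw] | one_part].
  apply: leq_trans (leq_maxr _ _).
  apply: (t_sparse_card_dominated sparseS vS wS) => u _.
  by rewrite /cmp_adj; case: eqVneq => [<- | //]; rewrite vw orbT.
apply: leq_trans (leq_maxl _ _).
apply: leq_trans (card_cmp_part_le_head (tag v)).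
apply/subset_leq_card/subsetP => u uS; rewrite mem_cmp_part.
by move/exists_inPn: one_part => /(_ u uS); rewrite negbK.
Qed.

End CompleteMultipartite.

Theorem corollary2p2 (t s : nat) (ns : seq nat) :
  0 < t -> 2 <= s -> size ns = s ->
  sorted geq ns -> all (fun m => 0 < m) ns ->
  (2 * t <= nth 0 ns 0 -> beta_t (@cmp_adj ns) t = nth 0 ns 0) /\
  (nth 0 ns 0 <= 2 * t -> beta_t (@cmp_adj ns) t <= 2 * t).
Proof.
move=> _ s_ge2 size_ns ns_sorted _.
have ub : beta_t (@cmp_adj ns) t <= maxn (nth 0 ns 0) (2 * t).
  by apply: beta_t_leq => S; apply: cmp_t_sparse_card.
have ns_gt0 : 0 < size ns by rewrite size_ns; apply: leq_trans s_ge2.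
have lb : nth 0 ns 0 <= beta_t (@cmp_adj ns) t.
  have := leq_beta_t (cmp_part_t_sparse t (Ordinal ns_gt0)).
  by rewrite card_cmp_part.
split=> [head_ge | head_le]; last by rewrite -(maxn_idPr head_le).
by apply/eqP; rewrite eqn_leq lb -(maxn_idPl head_ge) ub.
Qed.
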